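(* Let $X$ be a $k$-regular graph on $n$ vertices which may have loops (no multiple edges), where each loop contributes $1$ to the degree, and let $\tau$ be the least eigenvalue of its adjacency matrix $A$; assume $k>\tau$ (i.e. $A$ is not a scalar matrix). For any independent set $S$ of size $s$ containing $s_1$ vertices with loops, \[ s\le n\,\frac{-\tau+\sqrt{\tau^2+4s_1\frac{k-\tau}{n}}}{2(k-\tau)}. \]
   Context: The adjacency matrix has $A_{ii}=1$ if vertex $i$ carries a loop and $0$ otherwise, and $A_{ij}=1$ for adjacent distinct $i,j$. An independent set is a set of vertices no two distinct members of which are adjacent; looped vertices may belong to it. *)

From HB Require Import structures.
From mathcomp Require Import all_boot all_order all_algebra.
Set Implicit Arguments. Unset Strict Implicit. Unset Printing Implicit Defensive.
Import Order.TTheory GRing.Theory Num.Theory.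
Local Open Scope ring_scope.

(* A graph on vertex set 'I_n possibly with loops, no multiple edges:
   a symmetric relation adj; adj x x means x carries a loop. *)
Definition symmetric_graph (n : nat) (adj : rel 'I_n) : Prop :=
  forall x y, adj x y = adj y x.

Definition regular_graph (n : nat) (adj : rel 'I_n) (k : nat) : Prop :=
  forall x, #|[set y | adj x y]| = k.

Definition adjmx (R : nzRingType) (n : nat) (adj : rel 'I_n) : 'M[R]_n :=
  \matrix_(i, j) (adj i j)%:R.

Definition least_eigenvalue (R : realFieldType) (n : nat) (A : 'M[R]_n) (t : R) : Prop :=
  eigenvalue A t /\ (forall a, eigenvalue A a -> t <= a).

Definition independent_set (n : nat) (adj : rel 'I_n) (S : {set 'I_n}) : Prop :=
  forall x y, x \in S -> y \in S -> x != y -> ~~ adj x y.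

From HB Require Import structures.
From mathcomp Require Import all_boot all_order all_algebra.
From mathcomp Require Import complex ring lra.
Import Order.TTheory GRing.Theory Num.Theory.
Local Open Scope ring_scope.
Local Open Scope sesquilinear_scope.

(* Test the Rayleigh bound x A x^T >= tau x x^T on x = n 1_S - s 1.  Regularity
   makes the all-ones vector an eigenvector for k, and independence leaves only
   the loops of S in 1_S A 1_S^T, so x A x^T = n^2 s1 - n k s^2 while
   x x^T = n s (n - s).  The Rayleigh bound thus becomes the quadratic inequality
   (k - tau) s^2 + n tau s <= n s1, and s is at most its positive root. *)

Lemma spectral_diag_eigenvalue {C : numClosedFieldType} {n} {A : 'M[C]_n} j :
  A \is normalmx -> eigenvalue A (spectral_diag A 0 j).
Proof.
move=> /orthomx_spectralP A_spectral; set P := spectralmx A.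
have Punit : P \in unitmx by exact: spectral_unit.
have PA : P *m A = diag_mx (spectral_diag A) *m P.
  by rewrite {1}A_spectral !mulmxA mulmxV // mul1mx.
apply/eigenvalueP; exists (row j P).
  by rewrite -row_mul PA mul_diag_mx; apply/rowP=> i; rewrite !mxE.
apply: contra_neq (oner_neq0 C) => Pj0.
have /rowP/(_ j) := congr1 (row j) (mulmxV Punit).
by rewrite row_mul Pj0 mul0mx !mxE eqxx.
Qed.

Lemma hermitian_rayleigh_ge {C : numClosedFieldType} {n} {A : 'M[C]_n} {t : C} :
  A \is hermsymmx -> (forall j, t <= spectral_diag A 0 j) ->
  forall x : 'rV_n, t * (x *m x ^t* ) 0 0 <= (x *m A *m x ^t* ) 0 0.
Proof.
move=> Aherm t_le_d x; set P := spectralmx A; set d := spectral_diag A.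
have Punitary : P \is unitarymx by exact: spectral_unitarymx.
have PtP : P ^t* *m P = 1%:M by rewrite -invmx_unitary // mulVmx ?spectral_unit.
have A_spectral : A = P ^t* *m diag_mx d *m P.
  by rewrite -invmx_unitary //; exact/orthomx_spectralP/hermitian_normalmx.
(* With y = x P^*, the two forms become sum d_j |y_j|^2 and sum |y_j|^2. *)
set y := x *m P ^t*.
have yt : y ^t* = P *m x ^t* by rewrite trmx_mul map_mxM trmxCK.
have -> : x *m x ^t* = y *m y ^t* by rewrite yt mulmxA -[y *m P]mulmxA PtP mulmx1.
have -> : x *m A *m x ^t* = y *m diag_mx d *m y ^t* by rewrite yt A_spectral !mulmxA.
clearbody y; rewrite -subr_ge0 !mxE mulr_sumr -sumrB; apply: sumr_ge0 => j _.
rewrite mul_mx_diag !mxE mulrAC [t * _]mulrC -mulrBr.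
by rewrite mulr_ge0 ?mul_conjC_ge0 ?subr_ge0.
Qed.

(* MathComp's spectral theorem needs an algebraically closed field, hence the
   detour through the hermitian complexification over R[i]. *)
Section RealSymmetric.
Context {R : rcfType}.
Local Notation toC := (real_complex R).

Lemma symmetric_rayleigh_ge {n} {A : 'M[R]_n} {t : R} :
  A^T = A -> (forall a, eigenvalue A a -> t <= a) ->
  forall x : 'rV_n, t * (x *m x^T) 0 0 <= (x *m A *m x^T) 0 0.
Proof.
move=> Asym t_min x.
have toC_conj r : (toC r)^* = toC r by apply/conj_Creal/complex_realP; exists r.
have Aherm : map_mx toC A \is hermsymmx.
  apply/is_hermitianmxP; rewrite expr0 scale1r.
  by apply/matrixP=> i j; rewrite !mxE toC_conj -[in RHS]Asym mxE.
have t_le_d j : toC t <= spectral_diag (map_mx toC A) 0 j.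
  have dj_real := mxOverP (hermitian_spectral_diag_real Aherm) 0 j.
  rewrite -(RRe_real dj_real) lecR; apply: t_min.
  have := spectral_diag_eigenvalue j (hermitian_normalmx Aherm).
  by rewrite -{1}(RRe_real dj_real) eigenvalue_map.
have toC_entry (M : 'M_1) : toC (M 0 0) = map_mx toC M 0 0 by rewrite mxE.
have xt : map_mx toC x^T = (map_mx toC x) ^t* .
  by apply/matrixP=> i j; rewrite !mxE toC_conj.
have := hermitian_rayleigh_ge Aherm t_le_d (map_mx toC x).
by rewrite -xt -!map_mxM -!toC_entry -lecR rmorphM.
Qed.

End RealSymmetric.

Lemma sumr_mem_card (R : nzSemiRingType) (I : finType) (P : {pred I}) :
  \sum_i ((i \in P)%:R : R) = #|P|%:R.
Proof. by rewrite -sumr_const [RHS]big_mkcond; apply: eq_bigr => i _; case: (i \in P). Qed.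

Section CharacteristicVectors.
Context {R : comNzRingType} {n : nat}.

Definition charvec (S : {set 'I_n}) : 'rV[R]_n := \row_i (i \in S)%:R.

Local Notation ones := (charvec setT).

Lemma charvec_mul_tr (S T : {set 'I_n}) :
  charvec S *m (charvec T)^T = #|S :&: T|%:R%:M.
Proof.
apply/matrixP=> i j; rewrite !ord1 !mxE -sumr_mem_card.
apply: eq_bigr => x _; rewrite !mxE inE.
by case: (x \in S); case: (x \in T); rewrite ?mulr1 ?mulr0.
Qed.

Context {adj : rel 'I_n}.
Local Notation A := (adjmx R adj).

Lemma adjmx_tr : symmetric_graph adj -> A^T = A.
Proof. by move=> adj_sym; apply/matrixP=> i j; rewrite !mxE adj_sym. Qed.

Lemma adjmx_mul_ones {k : nat} : regular_graph adj k -> A *m ones^T = k%:R *: ones^T.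
Proof.
move=> adj_reg; apply/matrixP=> i j; rewrite /adjmx !mxE inE mulr1.
rewrite -(adj_reg i) -sumr_mem_card.
by apply: eq_bigr => x _; rewrite !mxE !inE mulr1.
Qed.

Lemma charvec_adjmx_charvec (S : {set 'I_n}) : independent_set adj S ->
  charvec S *m A *m (charvec S)^T = #|[set x in S | adj x x]|%:R%:M.
Proof.
move=> S_indep; apply/matrixP=> i0 j0; rewrite /adjmx !ord1 !mxE -sumr_mem_card.
apply: eq_bigr => j _; rewrite !mxE mulr_suml (bigD1 j) //= big1 ?addr0.
  by rewrite !mxE !inE; case: (j \in S); case: (adj j j); rewrite ?mulr1 ?mulr0 ?mul0r.
move=> i ij; rewrite !mxE.
case iS: (i \in S); case jS: (j \in S); rewrite ?mulr0 ?mul0r //.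
by rewrite (negbTE (S_indep i j iS jS ij)) mulr0 mul0r.
Qed.

Variable S : {set 'I_n}.
Local Notation s := #|S|%:R.
Local Notation testvec := (n%:R *: charvec S - s *: ones).

Lemma testvec_tr : testvec^T = n%:R *: (charvec S)^T - s *: ones^T.
Proof. by apply/matrixP=> i j; rewrite !mxE. Qed.

Lemma testvec_mul_tr : testvec *m testvec^T = (n%:R * s * (n%:R - s))%:M.
Proof.
rewrite testvec_tr mulmxBl !mulmxBr -!scalemxAl -!scalemxAr.
rewrite !charvec_mul_tr !setIid setIT setTI cardsT card_ord.
by apply/matrixP=> i j; rewrite !ord1 !mxE eqxx /=; ring.
Qed.

Lemma testvec_adjmx_form {k : nat} :
    symmetric_graph adj -> regular_graph adj k -> independent_set adj S ->
  testvec *m A *m testvec^T =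
    (n%:R ^+ 2 * #|[set x in S | adj x x]|%:R - n%:R * k%:R * s ^+ 2)%:M.
Proof.
move=> adj_sym adj_reg S_indep.
have A_ones := adjmx_mul_ones adj_reg.
have ones_A : ones *m A = k%:R *: ones.
  by rewrite -(adjmx_tr adj_sym) -[ones]trmxK -trmx_mul A_ones linearZ /= trmxK.
rewrite testvec_tr !mulmxBl !mulmxBr -!scalemxAl -!scalemxAr ones_A -!mulmxA A_ones.
rewrite -!scalemxAl -!scalemxAr mulmxA charvec_adjmx_charvec //.
rewrite !charvec_mul_tr !setIid setIT setTI cardsT card_ord.
by apply/matrixP=> i j; rewrite !ord1 !mxE eqxx /=; ring.
Qed.

End CharacteristicVectors.

Lemma quadratic_le_sqrt {F : rcfType} {a b c x : F} :
  0 < a -> a * x ^+ 2 + b * x <= c -> 2 * a * x + b <= Num.sqrt (b ^+ 2 + 4 * a * c).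
Proof.
move=> a_gt0 x_sol; apply: le_trans (ler_norm _) _.
rewrite -sqrtr_sqr ler_wsqrtr //.
have -> : (2 * a * x + b) ^+ 2 = b ^+ 2 + 4 * a * (a * x ^+ 2 + b * x) by ring.
by rewrite lerD2l ler_wpM2l // mulr_ge0 // ltW.
Qed.

Lemma quadratic_root_bound (F : rcfType) (a b c m x : F) : 0 < a -> 0 < m ->
    a * x ^+ 2 + m * b * x <= m * c ->
  x <= m * (- b + Num.sqrt (b ^+ 2 + 4 * c * a / m)) / (2 * a).
Proof.
move=> a_gt0 m_gt0 /(quadratic_le_sqrt a_gt0).
have -> : (m * b) ^+ 2 + 4 * a * (m * c) = m ^+ 2 * (b ^+ 2 + 4 * c * a / m).
  by field; rewrite gt_eqF.
rewrite sqrtrM ?sqr_ge0 // sqrtr_sqr (ger0_norm (ltW m_gt0)) => x_le.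
by rewrite ler_pdivlMr ?mulr_gt0 //; lra.
Qed.

Lemma independent_set_quadratic (R : rcfType) (n k : nat) (adj : rel 'I_n) (tau : R)
    (S : {set 'I_n}) :
    symmetric_graph adj -> regular_graph adj k ->
    (forall a, eigenvalue (adjmx R adj) a -> tau <= a) -> independent_set adj S ->
    (0 < n)%N ->
  (k%:R - tau) * #|S|%:R ^+ 2 + n%:R * tau * #|S|%:R <=
    n%:R * #|[set x in S | adj x x]|%:R.
Proof.
move=> adj_sym adj_reg tau_min S_indep n_gt0.
have := symmetric_rayleigh_ge (adjmx_tr adj_sym) tau_min
  (n%:R *: charvec S - #|S|%:R *: charvec setT).
rewrite testvec_mul_tr (testvec_adjmx_form S adj_sym adj_reg S_indep) !mxE eqxx /= mulr1n.
set N := n%:R; set K := k%:R; set s := #|S|%:R; set s1 := #|_|%:R => rayleigh.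
have N_gt0 : 0 < N by rewrite ltr0n.
rewrite -(ler_pM2l N_gt0) -subr_ge0.
have -> : N * (N * s1) - N * ((K - tau) * s ^+ 2 + N * tau * s) =
  N ^+ 2 * s1 - N * K * s ^+ 2 - tau * (N * s * (N - s)) by ring.
by rewrite subr_ge0.
Qed.

Theorem corollary3p3 (R : rcfType) (n k : nat) (adj : rel 'I_n) (tau : R)
  (S : {set 'I_n}) :
  symmetric_graph adj ->
  regular_graph adj k ->
  least_eigenvalue (adjmx R adj) tau ->
  tau < k%:R ->
  independent_set adj S ->
  let s := #|S| in
  let s1 := #|[set x in S | adj x x]| in
  s%:R <= n%:R * (- tau + Num.sqrt (tau ^+ 2 + 4 * s1%:R * (k%:R - tau) / n%:R))
            / (2 * (k%:R - tau)).
Proof.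
move=> adj_sym adj_reg [_ tau_min] tau_lt_k S_indep; cbv zeta.
have [n0 | n_gt0] := posnP n.
  have S0 : #|S| = 0%N.
    by apply/eqP; rewrite -leqn0 -n0 -[X in (_ <= X)%N]card_ord max_card.
  have -> : n%:R = 0 :> R by rewrite n0.
  by rewrite S0 !mul0r.
apply: quadratic_root_bound; rewrite ?subr_gt0 ?ltr0n //.
exact: independent_set_quadratic.
Qed.
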